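(* A map $T:\mathrm{PSym}(3)\to\mathrm{Sym}(3)$ satisfies Axioms (A0.1), (A0.2), (A0.3), (A1), (A2) and (A3) if and only if there exist constants $G,\Lambda\in\mathbb R$ with $G\neq0$ and $3\Lambda+2G\neq0$ such that $$T(U)=2G\,\log U+\Lambda\,\mathrm{tr}(\log U)\,\mathbb 1\qquad\text{for all }U\in\mathrm{PSym}(3),$$ equivalently, constants $G,K\in\mathbb R\setminus\{0\}$ with $T(U)=2G\,\mathrm{dev}_3\log U+K\,\mathrm{tr}(\log U)\,\mathbb 1$ for all $U\in\mathrm{PSym}(3)$ (where $K=\Lambda+\tfrac23 G$).
   Context: $\mathrm{Sym}(3)$: real symmetric $3\times3$ matrices; $\mathrm{PSym}(3)$: symmetric positive definite ones; $\mathbb 1$: identity; $\mathrm{O}(3)$: orthogonal group; $\log:\mathrm{PSym}(3)\to\mathrm{Sym}(3)$ the principal matrix logarithm; $\mathrm{dev}_3X=X-\tfrac13\mathrm{tr}(X)\mathbb 1$; coaxial means commuting. Axiom (A0.1): $T$ continuous. Axiom (A0.2): $T(U)=0$ iff $U=\mathbb 1$. Axiom (A0.3): $T(Q^TUQ)=Q^TT(U)Q$ for all $Q\in\mathrm O(3)$, $U\in\mathrm{PSym}(3)$. Axiom (A1): for every $\alpha>0$ there is $s\in\mathbb R$ such that for all $U\in\mathrm{PSym}(3)$: $U=\mathrm{diag}(\alpha,\alpha^{-1},1)$ iff $T(U)=\mathrm{diag}(s,-s,0)$. Axiom (A2): for every $\lambda>0$ there is $a\in\mathbb R$ such that for all $U\in\mathrm{PSym}(3)$: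 $U=\lambda\mathbb 1$ iff $T(U)=a\mathbb 1$. Axiom (A3): $T(U_1U_2)=T(U_1)+T(U_2)$ for all coaxial $U_1,U_2\in\mathrm{PSym}(3)$. *)

From Stdlib Require Import Reals ClassicalEpsilon.
Open Scope R_scope.

Inductive I3 : Type := i0 | i1 | i2.

Definition Mat := I3 -> I3 -> R.
Definition Vec := I3 -> R.

Definition sum3 (f : I3 -> R) : R := f i0 + f i1 + f i2.

Definition mmul (A B : Mat) : Mat := fun i j => sum3 (fun k => A i k * B k j).
Definition madd (A B : Mat) : Mat := fun i j => A i j + B i j.
Definition msub (A B : Mat) : Mat := fun i j => A i j - B i j.
Definition mscale (c : R) (A : Mat) : Mat := fun i j => c * A i j.
Definition mtr (A : Mat) : Mat := fun i j => A j i.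
Definition trace (A : Mat) : R := sum3 (fun i => A i i).
Definition I3eqb (i j : I3) : bool :=
  match i, j with i0, i0 | i1, i1 | i2, i2 => true | _, _ => false end.
Definition mid : Mat := fun i j => if I3eqb i j then 1 else 0.
Definition mzero : Mat := fun _ _ => 0.
Definition diag (d : Vec) : Mat := fun i j => if I3eqb i j then d i else 0.
Definition diag3 (a b c : R) : Mat :=
  diag (fun i => match i with i0 => a | i1 => b | i2 => c end).

Definition Sym (A : Mat) : Prop := mtr A = A.
Definition PSym (A : Mat) : Prop :=
  Sym A /\ forall x : Vec, x <> (fun _ => 0) ->
    0 < sum3 (fun i => sum3 (fun j => x i * A i j * x j)).
Definition Orth (Q : Mat) : Prop := mmul (mtr Q) Q = mid.

Definition coaxial (A B : Mat) : Prop := mmul A B = mmul B A.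

Definition dev3 (X : Mat) : Mat := msub X (mscale (trace X / 3) mid).

Definition IsLog (U L : Mat) : Prop :=
  exists (Q : Mat) (d : Vec), Orth Q /\ (forall i, 0 < d i) /\
    U = mmul (mmul Q (diag d)) (mtr Q) /\
    L = mmul (mmul Q (diag (fun i => ln (d i)))) (mtr Q).

Definition matlog (U : Mat) : Mat := epsilon (inhabits mzero) (IsLog U).

Definition mdist (A B : Mat) : R := sum3 (fun i => sum3 (fun j => Rabs (A i j - B i j))).

(* Axioms on T : PSym(3) -> Sym(3) (T is modelled as a total map on Mat,
   whose values outside PSym(3) are irrelevant). *)
Definition A0_1 (T : Mat -> Mat) : Prop :=
  forall U, PSym U -> forall eps, 0 < eps -> exists delta, 0 < delta /\
    forall V, PSym V -> mdist V U < delta -> mdist (T V) (T U) < eps.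
Definition A0_2 (T : Mat -> Mat) : Prop :=
  forall U, PSym U -> (T U = mzero <-> U = mid).
Definition A0_3 (T : Mat -> Mat) : Prop :=
  forall Q U, Orth Q -> PSym U ->
    T (mmul (mmul (mtr Q) U) Q) = mmul (mmul (mtr Q) (T U)) Q.
Definition A1 (T : Mat -> Mat) : Prop :=
  forall alpha, 0 < alpha -> exists s : R, forall U, PSym U ->
    (U = diag3 alpha (/ alpha) 1 <-> T U = diag3 s (- s) 0).
Definition A2 (T : Mat -> Mat) : Prop :=
  forall lam, 0 < lam -> exists a : R, forall U, PSym U ->
    (U = mscale lam mid <-> T U = mscale a mid).
Definition A3 (T : Mat -> Mat) : Prop :=
  forall U1 U2, PSym U1 -> PSym U2 -> coaxial U1 U2 ->
    T (mmul U1 U2) = madd (T U1) (T U2).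

Definition AllAxioms (T : Mat -> Mat) : Prop :=
  A0_1 T /\ A0_2 T /\ A0_3 T /\ A1 T /\ A2 T /\ A3 T.

(* The logarithm is well defined because the functional
   calculus [Q diag a Q^T |-> Q diag (f a) Q^T] does not depend on the diagonalization, and it
   is injective on PSym(3).  Since [L |-> 2 G L + Lam tr(L) 1] is injective exactly when
   [G <> 0] and [3 Lam + 2 G <> 0], the fibres of [T] demanded by (A0.2), (A1) and (A2) are
   singletons.  Isotropy follows from the equivariance of [log], additivity (A3) from the
   simultaneous diagonalization of commuting symmetric matrices, and continuity from a Lipschitz
   bound for [log] near a matrix whose eigenvalues are bounded away from 0 (eigenvalues move by
   at most the distance of the matrices).

   The axioms force the law; only (A0.1), (A0.2), (A0.3) and (A3) are needed.  The map
   [t |-> T (diag (e^t, 1, 1))] is additive and continuous at 0, hence linear, and invariance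
   under reflections and permutations of the axes makes it [diag (t u, t v, t v)].  Every
   positive diagonal matrix is a coaxial product of three such stretches along the axes, so
   [T (diag d) = 2 G diag (ln d) + Lam tr (diag (ln d)) 1] with [2 G = u - v] and [Lam = v], and
   isotropy extends this to PSym(3) by the spectral theorem.  Finally (A0.2) applied to
   [diag (e, 1/e, 1)] and [e 1] excludes [G = 0] and [3 Lam + 2 G = 0]. *)

From Pilot Require Import Defs.
From Stdlib Require Import Reals Lra Psatz Nsatz ZArith Ranalysis.
From Stdlib Require Import FunctionalExtensionality ClassicalEpsilon.
Open Scope R_scope.

Ltac mat_unfold :=
  unfold diag3, mmul, madd, msub, mscale, mtr, trace, mid, mzero, diag, sum3, I3eqb in *.
Ltac mat_ext :=
  apply functional_extensionality; intros [| |];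
  apply functional_extensionality; intros [| |].
Ltac vec_ext := apply functional_extensionality; intros [| |].
Ltac mat_ring := mat_ext; mat_unfold; simpl; ring.

Lemma mmul_assoc A B C : mmul (mmul A B) C = mmul A (mmul B C).
Proof. mat_ring. Qed.
Lemma mtr_mmul A B : mtr (mmul A B) = mmul (mtr B) (mtr A).
Proof. mat_ring. Qed.
Lemma mtr_mtr A : mtr (mtr A) = A.
Proof. reflexivity. Qed.
Lemma mmul_mid_l A : mmul mid A = A.
Proof. mat_ring. Qed.
Lemma mmul_mid_r A : mmul A mid = A.
Proof. mat_ring. Qed.
Lemma mtr_diag d : mtr (diag d) = diag d.
Proof. mat_ext; reflexivity. Qed.
Lemma mtr_mid : mtr mid = mid.
Proof. mat_ext; reflexivity. Qed.
Lemma diag_mmul a b : mmul (diag a) (diag b) = diag (fun i => a i * b i).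
Proof. mat_ring. Qed.
Lemma mmul_madd_l A B C : mmul (madd A B) C = madd (mmul A C) (mmul B C).
Proof. mat_ring. Qed.
Lemma mmul_madd_r A B C : mmul A (madd B C) = madd (mmul A B) (mmul A C).
Proof. mat_ring. Qed.
Lemma mmul_mscale_l c A B : mmul (mscale c A) B = mscale c (mmul A B).
Proof. mat_ring. Qed.
Lemma mmul_mscale_r c A B : mmul A (mscale c B) = mscale c (mmul A B).
Proof. mat_ring. Qed.
Lemma trace_mmulC A B : trace (mmul A B) = trace (mmul B A).
Proof. mat_unfold; ring. Qed.

Lemma diag_offdiag0 M :
  M i0 i1 = 0 -> M i0 i2 = 0 -> M i1 i0 = 0 -> M i1 i2 = 0 -> M i2 i0 = 0 -> M i2 i1 = 0 ->
  M = diag (fun i => M i i).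
Proof. intros; mat_ext; unfold diag, I3eqb; simpl; auto. Qed.

Definition det (A : Mat) : R :=
  A i0 i0 * (A i1 i1 * A i2 i2 - A i1 i2 * A i2 i1)
  - A i0 i1 * (A i1 i0 * A i2 i2 - A i1 i2 * A i2 i0)
  + A i0 i2 * (A i1 i0 * A i2 i1 - A i1 i1 * A i2 i0).

Definition adj (A : Mat) : Mat := fun i j =>
  match j, i with
  | i0, i0 => A i1 i1 * A i2 i2 - A i1 i2 * A i2 i1
  | i0, i1 => - (A i1 i0 * A i2 i2 - A i1 i2 * A i2 i0)
  | i0, i2 => A i1 i0 * A i2 i1 - A i1 i1 * A i2 i0
  | i1, i0 => - (A i0 i1 * A i2 i2 - A i0 i2 * A i2 i1)
  | i1, i1 => A i0 i0 * A i2 i2 - A i0 i2 * A i2 i0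
  | i1, i2 => - (A i0 i0 * A i2 i1 - A i0 i1 * A i2 i0)
  | i2, i0 => A i0 i1 * A i1 i2 - A i0 i2 * A i1 i1
  | i2, i1 => - (A i0 i0 * A i1 i2 - A i0 i2 * A i1 i0)
  | i2, i2 => A i0 i0 * A i1 i1 - A i0 i1 * A i1 i0
  end.

Lemma mmul_adj A : mmul A (adj A) = mscale (det A) mid.
Proof. mat_ext; unfold adj, det; mat_unfold; simpl; ring. Qed.
Lemma det_mmul A B : det (mmul A B) = det A * det B.
Proof. unfold det; mat_unfold; ring. Qed.
Lemma det_mtr A : det (mtr A) = det A.
Proof. unfold det; mat_unfold; ring. Qed.
Lemma det_mid : det mid = 1.
Proof. unfold det; mat_unfold; simpl; ring. Qed.

(* A left inverse is a right inverse: [det Q] is a unit and [Q^T] equals [adj Q / det Q]. *)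
Lemma orth_mmul_mtr Q : Orth Q -> mmul Q (mtr Q) = mid.
Proof.
  unfold Orth; intro HQ.
  assert (Hdet : det Q * det Q = 1).
  { rewrite <- det_mid, <- HQ, det_mmul, det_mtr; ring. }
  assert (Hdet0 : det Q <> 0) by (intro E; rewrite E in Hdet; lra).
  assert (Etr : mtr Q = mscale (/ det Q) (adj Q)).
  { rewrite <- (mmul_mid_r (mtr Q)).
    replace mid with (mscale (/ det Q) (mmul Q (adj Q))).
    2:{ rewrite mmul_adj; mat_ext; mat_unfold; simpl; field; auto. }
    rewrite mmul_mscale_r, <- mmul_assoc, HQ, mmul_mid_l; reflexivity. }
  rewrite Etr, mmul_mscale_r, mmul_adj; mat_ext; mat_unfold; simpl; field; auto.
Qed.

Lemma orth_mtr Q : Orth Q -> Orth (mtr Q).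
Proof. intro HQ; unfold Orth; rewrite mtr_mtr; apply orth_mmul_mtr; auto. Qed.

Lemma orth_mmul P Q : Orth P -> Orth Q -> Orth (mmul P Q).
Proof.
  unfold Orth; intros HP HQ.
  rewrite mtr_mmul, mmul_assoc, <- (mmul_assoc (mtr P)), HP, mmul_mid_l; auto.
Qed.

Lemma orth_mid : Orth mid.
Proof. unfold Orth; rewrite mtr_mid, mmul_mid_l; auto. Qed.

Lemma orth_conj_cancel P A : Orth P -> mmul (mmul P (mmul (mmul (mtr P) A) P)) (mtr P) = A.
Proof.
  intro HP.
  rewrite !mmul_assoc, orth_mmul_mtr, mmul_mid_r, <- mmul_assoc, orth_mmul_mtr, mmul_mid_l;
    auto.
Qed.

Lemma orth_conj_mmul P A B : Orth P ->
  mmul (mmul (mmul (mtr P) A) P) (mmul (mmul (mtr P) B) P) = mmul (mmul (mtr P) (mmul A B)) P.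
Proof.
  intro HP.
  rewrite !mmul_assoc, <- (mmul_assoc P (mtr P)), orth_mmul_mtr, mmul_mid_l; auto.
Qed.

Lemma mmul_orth_cancel_r A B P : Orth P -> mmul A P = mmul B P -> A = B.
Proof.
  intros HP E.
  rewrite <- (mmul_mid_r A), <- (mmul_mid_r B), <- (orth_mmul_mtr P HP), <- !mmul_assoc, E.
  reflexivity.
Qed.

Definition mv (A : Mat) (v : Vec) : Vec := fun i => sum3 (fun k => A i k * v k).
Definition vscale (c : R) (v : Vec) : Vec := fun i => c * v i.
Definition col (Q : Mat) (k : I3) : Vec := fun i => Q i k.
Definition nsq (v : Vec) : R := v i0 * v i0 + v i1 * v i1 + v i2 * v i2.

Lemma mv_mmul A B v : mv (mmul A B) v = mv A (mv B v).
Proof. vec_ext; unfold mv; mat_unfold; ring. Qed.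
Lemma mv_mid v : mv mid v = v.
Proof. vec_ext; unfold mv; mat_unfold; simpl; ring. Qed.
Lemma mv_diag d v : mv (diag d) v = fun i => d i * v i.
Proof. vec_ext; unfold mv; mat_unfold; simpl; ring. Qed.
Lemma mv_vscale A c v : mv A (vscale c v) = vscale c (mv A v).
Proof. vec_ext; unfold mv, vscale; mat_unfold; ring. Qed.
Lemma mv_col A B k : mv A (col B k) = col (mmul A B) k.
Proof. reflexivity. Qed.

Lemma mat_eq_orth_cols A B P :
  Orth P -> (forall k, mv A (col P k) = mv B (col P k)) -> A = B.
Proof.
  intros HP H; apply (mmul_orth_cancel_r A B P HP).
  apply functional_extensionality; intro i; apply functional_extensionality; intro j.
  exact (equal_f (H j) i).
Qed.

Lemma nsq_ge0 v : 0 <= nsq v.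
Proof. unfold nsq; nra. Qed.

Lemma nsq_eq0 v : nsq v = 0 -> v = (fun _ => 0).
Proof. unfold nsq; intro; vec_ext; nra. Qed.

Lemma nsq_gt0 v : v <> (fun _ => 0) -> 0 < nsq v.
Proof.
  intro Hv; destruct (nsq_ge0 v) as [|E]; auto.
  exfalso; apply Hv, nsq_eq0; auto.
Qed.

Definition odiag (Q : Mat) (d : Vec) : Mat := mmul (mmul Q (diag d)) (mtr Q).

Lemma odiag_mid d : odiag mid d = diag d.
Proof. unfold odiag; rewrite mtr_mid, mmul_mid_l, mmul_mid_r; auto. Qed.

Lemma odiag_mmul_orth Q P d : odiag (mmul Q P) d = mmul (mmul Q (odiag P d)) (mtr Q).
Proof. unfold odiag; rewrite mtr_mmul, !mmul_assoc; auto. Qed.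

Lemma odiag_undo Q d : Orth Q -> mmul (mmul (mtr Q) (odiag Q d)) Q = diag d.
Proof.
  intro HQ; unfold odiag.
  rewrite !mmul_assoc, HQ, mmul_mid_r, <- mmul_assoc, HQ, mmul_mid_l; auto.
Qed.

Lemma odiag_of_undo Q A d : Orth Q -> mmul (mmul (mtr Q) A) Q = diag d -> A = odiag Q d.
Proof.
  intros HQ H; rewrite <- (orth_conj_cancel Q A HQ), H; reflexivity.
Qed.

Lemma odiag_sym Q d : Sym (odiag Q d).
Proof. unfold Sym, odiag; rewrite !mtr_mmul, mtr_mtr, mtr_diag, mmul_assoc; auto. Qed.

Lemma odiag_madd P a b : madd (odiag P a) (odiag P b) = odiag P (fun i => a i + b i).
Proof. unfold odiag; mat_ring. Qed.

Lemma odiag_mmul P a b :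
  Orth P -> mmul (odiag P a) (odiag P b) = odiag P (fun i => a i * b i).
Proof.
  intro HP; unfold odiag.
  rewrite !mmul_assoc, <- (mmul_assoc (mtr P) P), HP, mmul_mid_l, <- (mmul_assoc (diag a)),
    diag_mmul; auto.
Qed.

Lemma odiag_col Q d k : Orth Q -> mv (odiag Q d) (col Q k) = vscale (d k) (col Q k).
Proof.
  intro HQ; unfold odiag; rewrite !mv_mmul.
  assert (E : mv (mtr Q) (col Q k) = col mid k) by (rewrite mv_col, HQ; reflexivity).
  rewrite E, mv_diag; vec_ext; unfold mv, vscale, col, sum3, mid; destruct k; simpl; ring.
Qed.

Lemma odiag_eigvec_transfer Q a b v mu c :
  Orth Q -> (forall j, a j = mu -> b j = c) ->
  mv (odiag Q a) v = vscale mu v -> mv (odiag Q b) v = vscale c v.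
Proof.
  intros HQ Hab Hv; unfold odiag in *.
  set (w := mv (mtr Q) v).
  assert (Hw : forall j, a j * w j = mu * w j).
  { intro j; assert (E := f_equal (mv (mtr Q)) Hv).
    rewrite !mv_mmul, <- (mv_mmul (mtr Q) Q), HQ, mv_mid, mv_diag, mv_vscale in E.
    exact (equal_f E j). }
  assert (Hbw : mv (diag b) w = vscale c w).
  { rewrite mv_diag; apply functional_extensionality; intro i; unfold vscale.
    destruct (Req_dec (w i) 0) as [Z|Z].
    - rewrite Z; ring.
    - rewrite (Hab i); auto; apply (Rmult_eq_reg_r (w i)); auto. }
  rewrite !mv_mmul; fold w; rewrite Hbw, mv_vscale; unfold w.
  rewrite <- mv_mmul, orth_mmul_mtr, mv_mid; auto.
Qed.

(* The functional calculus [f(Q diag a Q^T) = Q diag (f a) Q^T] is independent of the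
   chosen diagonalization. *)
Lemma odiag_fun_unique Q a b P e f F :
  Orth Q -> Orth P -> odiag Q a = odiag P e ->
  (forall j, b j = F (a j)) -> (forall j, f j = F (e j)) -> odiag Q b = odiag P f.
Proof.
  intros HQ HP E Hb Hf.
  apply (mat_eq_orth_cols _ _ P HP); intro k.
  rewrite odiag_col by auto.
  apply (odiag_eigvec_transfer Q a b _ (e k)); auto.
  - intros j Hj; rewrite Hb, Hf, Hj; auto.
  - rewrite E; apply odiag_col; auto.
Qed.

Lemma IsLog_odiag Q d :
  Orth Q -> (forall i, 0 < d i) -> IsLog (odiag Q d) (odiag Q (fun i => ln (d i))).
Proof. intros; exists Q, d; unfold odiag; auto. Qed.

Lemma IsLog_diag d : (forall i, 0 < d i) -> IsLog (diag d) (diag (fun i => ln (d i))).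
Proof. intro Hd; rewrite <- !odiag_mid; apply IsLog_odiag; auto; apply orth_mid. Qed.

Lemma IsLog_unique U L L' : IsLog U L -> IsLog U L' -> L = L'.
Proof.
  intros (Q & d & HQ & Hd & HU & HL) (P & e & HP & He & HU' & HL'); subst.
  apply (odiag_fun_unique Q d _ P e _ ln); auto; unfold odiag; congruence.
Qed.

Lemma IsLog_inj U U' L : IsLog U L -> IsLog U' L -> U = U'.
Proof.
  intros (Q & d & HQ & Hd & HU & HL) (P & e & HP & He & HU' & HL'); subst.
  apply (odiag_fun_unique Q (fun i => ln (d i)) _ P (fun i => ln (e i)) _ exp); auto.
  all: intro j; rewrite exp_ln; auto.
Qed.

Lemma matlog_IsLog U L : IsLog U L -> matlog U = L.
Proof.
  intro H; unfold matlog; apply (IsLog_unique U); auto.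
  apply epsilon_spec; exists L; auto.
Qed.

(** * The spectral theorem *)

Lemma cubic_pos_at_bound x a b c :
  1 <= x -> Rabs a + Rabs b + Rabs c + 1 = x -> 0 < x*x*x - a*x*x + b*x - c.
Proof.
  intros Hx Ex.
  pose proof (Rle_abs a); pose proof (Rle_abs c); pose proof (Rabs_pos b); pose proof (Rabs_pos c).
  assert (- b <= Rabs b) by (rewrite <- Rabs_Ropp; apply Rle_abs).
  assert (a*(x*x) <= Rabs a*(x*x)) by (apply Rmult_le_compat_r; nra).
  assert (-b*x <= Rabs b*x) by (apply Rmult_le_compat_r; lra).
  assert (Rabs b * x <= Rabs b*(x*x)) by (apply Rmult_le_compat_l; nra).
  assert (Rabs c <= Rabs c*(x*x)).
  { rewrite <- (Rmult_1_r (Rabs c)) at 1; apply Rmult_le_compat_l; nra. }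
  nra.
Qed.

Lemma cubic_has_root a b c : exists t, t*t*t - a*t*t + b*t - c = 0.
Proof.
  set (M := Rabs a + Rabs b + Rabs c + 1).
  assert (HM : 1 <= M).
  { unfold M; pose proof (Rabs_pos a); pose proof (Rabs_pos b); pose proof (Rabs_pos c); lra. }
  assert (Hpos := cubic_pos_at_bound M a b c HM eq_refl).
  assert (Hneg := cubic_pos_at_bound M (-a) b (-c) HM).
  rewrite !Rabs_Ropp in Hneg; specialize (Hneg eq_refl).
  destruct (IVT (fun t => t*t*t - a*t*t + b*t - c) (-M) M) as [t [_ Ht]];
    [reg | lra | simpl; nra | simpl; lra | exists t; exact Ht].
Qed.

(* A kernel vector can be read off a nonzero row, since all 2x2 minors vanish. *)
Lemma sym_adj0_kernel M : Sym M -> (forall i j, adj M i j = 0) ->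
  exists v, 0 < nsq v /\ mv M v = (fun _ => 0).
Proof.
  intros HS Hadj.
  assert (Hs : forall i j, M j i = M i j) by (intros i j; exact (equal_f (equal_f HS i) j)).
  pose proof (Hadj i0 i0); pose proof (Hadj i1 i0); pose proof (Hadj i2 i0);
    pose proof (Hadj i1 i1); pose proof (Hadj i2 i1); pose proof (Hadj i2 i2).
  unfold adj in *; simpl in *.
  rewrite ?(Hs i1 i0), ?(Hs i2 i0), ?(Hs i2 i1) in *.
  destruct (Req_dec (M i0 i0) 0) as [Z0|Z0].
  2:{ exists (fun i => match i with i0 => M i0 i1 | i1 => - M i0 i0 | i2 => 0 end).
      split; [unfold nsq; nra|].
      vec_ext; unfold mv, sum3; rewrite ?(Hs i1 i0), ?(Hs i2 i0), ?(Hs i2 i1); nra. }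
  destruct (Req_dec (M i1 i1) 0) as [Z1|Z1].
  2:{ exists (fun i => match i with i0 => 0 | i1 => M i1 i2 | i2 => - M i1 i1 end).
      split; [unfold nsq; nra|].
      vec_ext; unfold mv, sum3; rewrite ?(Hs i1 i0), ?(Hs i2 i0), ?(Hs i2 i1); nra. }
  destruct (Req_dec (M i2 i2) 0) as [Z2|Z2].
  2:{ exists (fun i => match i with i0 => M i2 i2 | i1 => 0 | i2 => - M i2 i0 end).
      split; [unfold nsq; nra|].
      vec_ext; unfold mv, sum3; rewrite ?(Hs i1 i0), ?(Hs i2 i0), ?(Hs i2 i1); nra. }
  exists (fun i => match i with i0 => 1 | _ => 0 end); split; [unfold nsq; lra|].
  vec_ext; unfold mv, sum3; rewrite ?(Hs i1 i0), ?(Hs i2 i0), ?(Hs i2 i1); nra.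
Qed.

(* Every column of [adj M] lies in the kernel of [M]. *)
Lemma sym_singular_kernel M :
  Sym M -> det M = 0 -> exists v, 0 < nsq v /\ mv M v = (fun _ => 0).
Proof.
  intros HS Hdet.
  assert (Hcol : forall k, 0 < nsq (col (adj M) k) ->
                           exists v, 0 < nsq v /\ mv M v = (fun _ => 0)).
  { intros k Hk; exists (col (adj M) k); split; auto.
    rewrite mv_col, mmul_adj, Hdet.
    apply functional_extensionality; intro; unfold col, mscale; ring. }
  destruct (nsq_ge0 (col (adj M) i0)) as [|Z0]; [apply (Hcol i0); auto|].
  destruct (nsq_ge0 (col (adj M) i1)) as [|Z1]; [apply (Hcol i1); auto|].
  destruct (nsq_ge0 (col (adj M) i2)) as [|Z2]; [apply (Hcol i2); auto|].
  apply sym_adj0_kernel; auto; intros i j.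
  destruct j; [ apply (equal_f (nsq_eq0 _ (eq_sym Z0)) i)
              | apply (equal_f (nsq_eq0 _ (eq_sym Z1)) i)
              | apply (equal_f (nsq_eq0 _ (eq_sym Z2)) i) ].
Qed.

(* [t] is a root of the characteristic polynomial of [A]. *)
Lemma sym_eigvec_exists A : Sym A -> exists t u, nsq u = 1 /\ mv A u = vscale t u.
Proof.
  intro HS.
  destruct (cubic_has_root (trace A)
     (A i0 i0 * A i1 i1 - A i0 i1 * A i1 i0 + A i0 i0 * A i2 i2 - A i0 i2 * A i2 i0
      + A i1 i1 * A i2 i2 - A i1 i2 * A i2 i1) (det A)) as [t Ht].
  set (M := msub A (mscale t mid)).
  assert (HdetM : det M = 0).
  { match type of Ht with ?X = 0 =>
      assert (E : det M = - X) by (unfold M, det; mat_unfold; simpl; ring) end.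
    rewrite E, Ht; ring. }
  assert (HSM : Sym M).
  { assert (Hs : forall i j, A j i = A i j) by (intros i j; exact (equal_f (equal_f HS i) j)).
    unfold M, Sym; mat_ext; mat_unfold; simpl; first [ring | rewrite Hs; ring]. }
  destruct (sym_singular_kernel M HSM HdetM) as [v [Hv Hker]].
  set (n := sqrt (nsq v)).
  assert (Hn : 0 < n) by (apply sqrt_lt_R0; auto).
  assert (Hnn : n * n = nsq v) by (apply sqrt_sqrt; lra).
  exists t, (vscale (/ n) v); split.
  - transitivity (nsq v / (n * n)); [unfold nsq, vscale; field; lra | rewrite Hnn; field; lra].
  - assert (Ev : mv A v = vscale t v).
    { apply functional_extensionality; intro i; assert (E := equal_f Hker i).
      unfold M, mv, vscale in *; mat_unfold; destruct i; simpl in *; lra. }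
    rewrite mv_vscale, Ev; apply functional_extensionality; intro; unfold vscale; ring.
Qed.

(* The reflection exchanging [col mid i0] and [u]. *)
Lemma unit_vec_orth_completion u : nsq u = 1 -> exists Q, Orth Q /\ col Q i0 = u.
Proof.
  intro Hu; unfold nsq in Hu.
  set (a := u i0) in *; set (b := u i1) in *; set (c := u i2) in *.
  destruct (Req_dec a 1) as [Ea|Ea].
  - exists mid; split; [apply orth_mid|].
    assert (b = 0) by nra; assert (c = 0) by nra.
    vec_ext; unfold col, mid; simpl; unfold a, b, c in *; lra.
  - set (k := / (1 - a)); assert (Hk : k * (1 - a) = 1) by (unfold k; field; lra).
    exists (fun i j => match i, j with
       | i0, i0 => a | i0, i1 => b | i0, i2 => c
       | i1, i0 => b | i1, i1 => 1 - b*b*k | i1, i2 => - (b*c*k)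
       | i2, i0 => c | i2, i1 => - (b*c*k) | i2, i2 => 1 - c*c*k end).
    split.
    + clearbody a b c k; unfold Orth; mat_ext; mat_unfold; simpl; nsatz.
    + vec_ext; reflexivity.
Qed.

(* [(c, s)] is the normalized eigenvector [(q, mu - p)] of [[p, q]; [q, r]] for its larger
   eigenvalue [mu]. *)
Lemma jacobi_rotation_exists p q r :
  exists c s, c*c + s*s = 1 /\ (r - p)*c*s + q*(c*c - s*s) = 0.
Proof.
  destruct (Req_dec q 0) as [Hq|Hq]; [exists 1, 0; subst; split; ring|].
  assert (Hq2 : 0 < q*q) by apply (Rsqr_pos_lt q Hq).
  set (S := sqrt ((p-r)*(p-r) + 4*q*q)).
  assert (HS : S * S = (p-r)*(p-r) + 4*q*q)
    by (apply sqrt_sqrt; pose proof (Rle_0_sqr (p - r)); unfold Rsqr in *; lra).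
  set (mu := (p + r + S) / 2).
  assert (Hmu : 2 * mu = p + r + S) by (unfold mu; field).
  set (n := sqrt (q*q + (mu-p)*(mu-p))).
  assert (Hpos : 0 < q*q + (mu-p)*(mu-p)) by (pose proof (Rle_0_sqr (mu - p)); unfold Rsqr in *; lra).
  assert (Hn : n * n = q*q + (mu-p)*(mu-p)) by (apply sqrt_sqrt; lra).
  assert (Hn0 : 0 < n) by (apply sqrt_lt_R0; lra).
  set (ni := / n); assert (Hni : ni * n = 1) by (unfold ni; field; lra).
  exists (q * ni), ((mu - p) * ni).
  clearbody S mu n ni; clear Hq Hq2 Hpos Hn0; split; nsatz.
Qed.

Definition rot12 c s : Mat := fun i j => match i, j with
  | i0, i0 => 1 | i1, i1 => c | i1, i2 => - s | i2, i1 => s | i2, i2 => c | _, _ => 0 end.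

Lemma rot12_orth c s : c*c + s*s = 1 -> Orth (rot12 c s).
Proof. intro H; unfold Orth, rot12; mat_ext; mat_unfold; simpl; nsatz. Qed.

Lemma rot12_diagonalizes B c s :
  B i1 i0 = 0 -> B i2 i0 = 0 -> B i0 i1 = 0 -> B i0 i2 = 0 -> B i2 i1 = B i1 i2 ->
  c*c + s*s = 1 -> (B i2 i2 - B i1 i1)*c*s + B i1 i2*(c*c - s*s) = 0 ->
  let M := mmul (mmul (mtr (rot12 c s)) B) (rot12 c s) in M = diag (fun i => M i i).
Proof. intros * ? ? ? ? ? ? ? M; apply diag_offdiag0; unfold M, rot12; mat_unfold; simpl; nsatz. Qed.

Lemma sym_block12_rot12 B : Sym B -> B i1 i0 = 0 -> B i2 i0 = 0 ->
  exists c s d, c*c + s*s = 1 /\ B = odiag (rot12 c s) d.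
Proof.
  intros HS H10 H20.
  assert (Hs : forall i j, B j i = B i j) by (intros i j; exact (equal_f (equal_f HS i) j)).
  destruct (jacobi_rotation_exists (B i1 i1) (B i1 i2) (B i2 i2)) as [c [s [Hcs Hrot]]].
  exists c, s, (fun i => mmul (mmul (mtr (rot12 c s)) B) (rot12 c s) i i); split; auto.
  apply odiag_of_undo; [apply rot12_orth; auto|].
  apply rot12_diagonalizes; auto; rewrite Hs; auto.
Qed.

Lemma sym_spectral A : Sym A -> exists Q d, Orth Q /\ A = odiag Q d.
Proof.
  intro HS.
  destruct (sym_eigvec_exists A HS) as [t [u [Hu Hev]]].
  destruct (unit_vec_orth_completion u Hu) as [Q1 [HQ1 Hcol]].
  set (B := mmul (mmul (mtr Q1) A) Q1).
  assert (HB0 : col B i0 = vscale t (col mid i0)).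
  { unfold B; rewrite <- mv_col, mv_mmul, Hcol, Hev, mv_vscale, <- Hcol, mv_col, HQ1.
    reflexivity. }
  assert (HBs : Sym B) by (unfold Sym, B; rewrite !mtr_mmul, mtr_mtr, HS, mmul_assoc; auto).
  assert (HB10 : B i1 i0 = 0 /\ B i2 i0 = 0).
  { pose proof (equal_f HB0 i1); pose proof (equal_f HB0 i2).
    unfold col, vscale, mid in *; simpl in *; split; lra. }
  destruct (sym_block12_rot12 B HBs (proj1 HB10) (proj2 HB10)) as [c [s [d [Hcs HBR]]]].
  exists (mmul Q1 (rot12 c s)), d; split; [apply orth_mmul, rot12_orth; auto|].
  rewrite odiag_mmul_orth, <- HBR; unfold B; rewrite orth_conj_cancel; auto.
Qed.

Lemma odiag_quad_form P e x :
  sum3 (fun i => sum3 (fun j => x i * odiag P e i j * x j)) =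
  sum3 (fun k => e k * (mv (mtr P) x k * mv (mtr P) x k)).
Proof. unfold odiag, mv; mat_unfold; ring. Qed.

Lemma psym_odiag_pos U Q d : PSym U -> Orth Q -> U = odiag Q d -> forall k, 0 < d k.
Proof.
  intros [_ Hpos] HQ HU k.
  assert (Hmv : mv (mtr Q) (col Q k) = col mid k) by (rewrite mv_col, HQ; reflexivity).
  assert (Hk : col Q k <> (fun _ => 0)).
  { intro E; assert (E' := f_equal (fun v => v k) Hmv); simpl in E'.
    rewrite E in E'; unfold mv, col, mid, sum3 in E'; destruct k; simpl in E'; lra. }
  specialize (Hpos _ Hk); rewrite HU, odiag_quad_form, Hmv in Hpos.
  unfold col, mid, sum3 in Hpos; destruct k; simpl in Hpos; lra.
Qed.

Lemma odiag_psym P e : Orth P -> (forall i, 0 < e i) -> PSym (odiag P e).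
Proof.
  intros HP He; split; [apply odiag_sym|].
  intros x Hx; rewrite odiag_quad_form.
  set (y := mv (mtr P) x).
  assert (Hy : 0 < nsq y).
  { apply nsq_gt0; intro E; apply Hx.
    rewrite <- (mv_mid x), <- (orth_mmul_mtr P HP), mv_mmul; fold y; rewrite E.
    apply functional_extensionality; intro; unfold mv, sum3; ring. }
  clearbody y.
  assert (Ht : forall k, 0 <= e k * (y k * y k) /\ (y k <> 0 -> 0 < e k * (y k * y k))).
  { intro k; pose proof (He k); split.
    - apply Rmult_le_pos; [lra | apply Rle_0_sqr].
    - intro; apply Rmult_lt_0_compat; [lra | apply Rsqr_pos_lt; auto]. }
  destruct (Ht i0) as [H0 H0'], (Ht i1) as [H1 H1'], (Ht i2) as [H2 H2']; unfold sum3.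
  destruct (Req_dec (y i0) 0) as [Z0|Z0]; [|specialize (H0' Z0); lra].
  destruct (Req_dec (y i1) 0) as [Z1|Z1]; [|specialize (H1' Z1); lra].
  destruct (Req_dec (y i2) 0) as [Z2|Z2]; [|specialize (H2' Z2); lra].
  unfold nsq in Hy; rewrite Z0, Z1, Z2 in Hy; lra.
Qed.

Lemma diag_psym d : (forall i, 0 < d i) -> PSym (diag d).
Proof. intro Hd; rewrite <- odiag_mid; apply odiag_psym; auto; apply orth_mid. Qed.

Lemma psym_matlog U : PSym U -> exists Q d, Orth Q /\ (forall i, 0 < d i) /\
  U = odiag Q d /\ matlog U = odiag Q (fun i => ln (d i)).
Proof.
  intro HU; destruct (sym_spectral U (proj1 HU)) as [Q [d [HQ EU]]].
  assert (Hd := psym_odiag_pos U Q d HU HQ EU).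
  exists Q, d; repeat split; auto.
  apply matlog_IsLog; rewrite EU; apply IsLog_odiag; auto.
Qed.

Lemma psym_IsLog_matlog U : PSym U -> IsLog U (matlog U).
Proof.
  intro HU; destruct (psym_matlog U HU) as [Q [d [HQ [Hd [EU EL]]]]].
  rewrite EL, EU; apply IsLog_odiag; auto.
Qed.

(** * Commuting symmetric matrices *)

Definition simul_diagonalizable (A B : Mat) : Prop :=
  exists R a b, Orth R /\ A = odiag R a /\ B = odiag R b.

Lemma simul_diagonalizable_conj P A B : Orth P ->
  simul_diagonalizable (mmul (mmul (mtr P) A) P) (mmul (mmul (mtr P) B) P) ->
  simul_diagonalizable A B.
Proof.
  intros HP (R & a & b & HR & EA & EB).
  exists (mmul P R), a, b; split; [apply orth_mmul; auto|].
  rewrite !odiag_mmul_orth, <- EA, <- EB, !orth_conj_cancel; auto.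
Qed.

Lemma scalar_odiag R c : Orth R -> mscale c mid = odiag R (fun _ => c).
Proof.
  intro HR; unfold odiag.
  replace (diag (fun _ => c)) with (mscale c mid) by mat_ring.
  rewrite mmul_mscale_r, mmul_mid_r, mmul_mscale_l, orth_mmul_mtr; auto.
Qed.

Lemma diag_odiag_rot12 d c s : c*c + s*s = 1 -> d i2 = d i1 -> diag d = odiag (rot12 c s) d.
Proof. intros Hcs Hd; unfold odiag, rot12; mat_ext; mat_unfold; simpl; rewrite ?Hd; nsatz. Qed.

Definition swap01 : Mat := fun i j =>
  match i, j with i0, i1 | i1, i0 | i2, i2 => 1 | _, _ => 0 end.
Definition swap02 : Mat := fun i j =>
  match i, j with i0, i2 | i2, i0 | i1, i1 => 1 | _, _ => 0 end.
Definition swap12 : Mat := fun i j =>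
  match i, j with i1, i2 | i2, i1 | i0, i0 => 1 | _, _ => 0 end.

Lemma swap01_orth : Orth swap01. Proof. unfold Orth, swap01; mat_ring. Qed.
Lemma swap02_orth : Orth swap02. Proof. unfold Orth, swap02; mat_ring. Qed.
Lemma swap12_orth : Orth swap12. Proof. unfold Orth, swap12; mat_ring. Qed.

Lemma diag_commuting_sym_block12 d B : d i2 = d i1 -> Sym B -> B i1 i0 = 0 -> B i2 i0 = 0 ->
  simul_diagonalizable (diag d) B.
Proof.
  intros Hd HB H10 H20.
  destruct (sym_block12_rot12 B HB H10 H20) as [c [s [b [Hcs EB]]]].
  exists (rot12 c s), d, b; split; [apply rot12_orth; auto|].
  split; auto; apply diag_odiag_rot12; auto.
Qed.

(* Off-diagonal entries of [B] vanish between distinct eigenvalues of [diag d]; up to a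
   permutation of coordinates, equal eigenvalues form the (1, 2)-block. *)
Lemma diag_commuting_sym d B : Sym B -> mmul (diag d) B = mmul B (diag d) ->
  simul_diagonalizable (diag d) B.
Proof.
  intros HS HC.
  assert (Hs : forall i j, B j i = B i j) by (intros i j; exact (equal_f (equal_f HS i) j)).
  assert (Z : forall i j, d i <> d j -> B i j = 0).
  { intros i j Hij; assert (E := equal_f (equal_f HC i) j).
    unfold mmul, diag, sum3 in E.
    apply (Rmult_eq_reg_r (d i - d j)); [|lra]; destruct i, j; simpl in E; lra. }
  destruct (Req_dec (d i0) (d i1)) as [E01|E01];
  destruct (Req_dec (d i0) (d i2)) as [E02|E02];
  destruct (Req_dec (d i1) (d i2)) as [E12|E12]; try (exfalso; lra).
  - destruct (sym_spectral B HS) as [R [b [HR EB]]].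
    exists R, (fun _ => d i0), b; repeat split; auto.
    rewrite <- scalar_odiag by auto; mat_ext; mat_unfold; simpl; lra.
  - apply (simul_diagonalizable_conj swap02); [apply swap02_orth|].
    replace (mmul (mmul (mtr swap02) (diag d)) swap02)
      with (diag (fun i => match i with i0 => d i2 | i1 => d i1 | i2 => d i0 end))
      by (unfold swap02; mat_ring).
    apply diag_commuting_sym_block12; [simpl; lra | | |].
    + unfold Sym; rewrite !mtr_mmul, mtr_mtr, HS, mmul_assoc; auto.
    + unfold swap02, mmul, mtr, sum3; simpl; ring_simplify; apply Z; lra.
    + unfold swap02, mmul, mtr, sum3; simpl; ring_simplify; apply Z; lra.
  - apply (simul_diagonalizable_conj swap01); [apply swap01_orth|].
    replace (mmul (mmul (mtr swap01) (diag d)) swap01)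
      with (diag (fun i => match i with i0 => d i1 | i1 => d i0 | i2 => d i2 end))
      by (unfold swap01; mat_ring).
    apply diag_commuting_sym_block12; [simpl; lra | | |].
    + unfold Sym; rewrite !mtr_mmul, mtr_mtr, HS, mmul_assoc; auto.
    + unfold swap01, mmul, mtr, sum3; simpl; ring_simplify; apply Z; lra.
    + unfold swap01, mmul, mtr, sum3; simpl; ring_simplify; apply Z; lra.
  - apply diag_commuting_sym_block12; auto; apply Z; lra.
  - exists mid, d, (fun i => B i i); rewrite !odiag_mid; split; [apply orth_mid|].
    split; auto; apply diag_offdiag0; apply Z; auto.
Qed.

Lemma commuting_sym_simul U1 U2 : Sym U1 -> Sym U2 -> coaxial U1 U2 ->
  simul_diagonalizable U1 U2.
Proof.
  intros H1 H2 HC.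
  destruct (sym_spectral U1 H1) as [Q [d [HQ EU1]]].
  apply (simul_diagonalizable_conj Q); auto.
  rewrite EU1, odiag_undo by auto; apply diag_commuting_sym.
  - unfold Sym; rewrite !mtr_mmul, mtr_mtr, H2, mmul_assoc; auto.
  - rewrite <- (odiag_undo Q d), <- EU1 by auto.
    rewrite !orth_conj_mmul, HC; auto.
Qed.

Definition lame (G Lam : R) (L : Mat) : Mat :=
  madd (mscale (2 * G) L) (mscale (Lam * trace L) mid).

Lemma trace_lame G Lam L : trace (lame G Lam L) = (2 * G + 3 * Lam) * trace L.
Proof. unfold lame; mat_unfold; simpl; ring. Qed.

Lemma lame_inj G Lam L K : G <> 0 -> 3 * Lam + 2 * G <> 0 ->
  lame G Lam L = lame G Lam K -> L = K.
Proof.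
  intros HG HL E.
  assert (Htr : trace L = trace K).
  { assert (E' := f_equal trace E); rewrite !trace_lame in E'.
    apply (Rmult_eq_reg_l (2 * G + 3 * Lam)); auto; lra. }
  apply functional_extensionality; intro i; apply functional_extensionality; intro j.
  assert (E' := equal_f (equal_f E i) j); unfold lame, madd, mscale in E'.
  rewrite Htr in E'; apply (Rmult_eq_reg_l (2 * G)); lra.
Qed.

Lemma lame_orth_conj G Lam Q L : Orth Q ->
  lame G Lam (mmul (mmul (mtr Q) L) Q) = mmul (mmul (mtr Q) (lame G Lam L)) Q.
Proof.
  intro HQ.
  assert (Htr : trace (mmul (mmul (mtr Q) L) Q) = trace L).
  { rewrite trace_mmulC, <- mmul_assoc, orth_mmul_mtr, mmul_mid_l; auto. }
  unfold lame; rewrite Htr, mmul_madd_r, mmul_madd_l, !mmul_mscale_r, !mmul_mscale_l,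
    mmul_mid_r, HQ; auto.
Qed.

Lemma lame_madd G Lam L K : lame G Lam (madd L K) = madd (lame G Lam L) (lame G Lam K).
Proof. unfold lame; mat_ring. Qed.

Lemma lame_msub G Lam L K : lame G Lam (msub L K) = msub (lame G Lam L) (lame G Lam K).
Proof. unfold lame; mat_ring. Qed.

Lemma lame_mzero G Lam : lame G Lam mzero = mzero.
Proof. unfold lame; mat_ring. Qed.

Lemma lame_dev3 G K L :
  madd (mscale (2 * G) (dev3 L)) (mscale (K * trace L) mid) = lame G (K - 2 * G / 3) L.
Proof. unfold dev3, lame; mat_ext; mat_unfold; simpl; field. Qed.


(** * Continuity of the logarithm *)

Definition mnorm (X : Mat) : R := sum3 (fun i => sum3 (fun j => Rabs (X i j))).

Lemma mdist_mnorm A B : mdist A B = mnorm (msub A B).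
Proof. reflexivity. Qed.

Lemma sum3_le f g : (forall i, f i <= g i) -> sum3 f <= sum3 g.
Proof. intro H; unfold sum3; pose proof (H i0); pose proof (H i1); pose proof (H i2); lra. Qed.

Lemma sum3_ge_term f k : (forall i, 0 <= f i) -> f k <= sum3 f.
Proof.
  intro H; unfold sum3; pose proof (H i0); pose proof (H i1); pose proof (H i2).
  destruct k; lra.
Qed.

Lemma Rabs_sum3_le f : Rabs (sum3 f) <= sum3 (fun i => Rabs (f i)).
Proof.
  unfold sum3; eapply Rle_trans; [apply Rabs_triang|].
  pose proof (Rabs_triang (f i0) (f i1)); lra.
Qed.

Lemma mnorm_ge0 X : 0 <= mnorm X.
Proof.
  unfold mnorm; apply (Rle_trans _ (sum3 (fun _ => 0))); [unfold sum3; lra|].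
  apply sum3_le; intro i; apply (Rle_trans _ (sum3 (fun _ => 0))); [unfold sum3; lra|].
  apply sum3_le; intro; apply Rabs_pos.
Qed.

Lemma Rabs_entry_le_mnorm X k l : Rabs (X k l) <= mnorm X.
Proof.
  unfold mnorm; eapply Rle_trans; [|apply (sum3_ge_term _ k)].
  - apply (sum3_ge_term (fun j => Rabs (X k j))); intro; apply Rabs_pos.
  - intro i; apply (Rle_trans _ (Rabs (X i i0))); [apply Rabs_pos|].
    apply (sum3_ge_term (fun j => Rabs (X i j))); intro; apply Rabs_pos.
Qed.

Lemma mnorm_madd_le A B : mnorm (madd A B) <= mnorm A + mnorm B.
Proof.
  unfold mnorm; eapply Rle_trans.
  - apply sum3_le; intro i; apply sum3_le; intro j; apply Rabs_triang.
  - unfold madd, sum3; lra.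
Qed.

Lemma mnorm_mscale c A : mnorm (mscale c A) = Rabs c * mnorm A.
Proof. unfold mnorm, mscale, sum3; rewrite !Rabs_mult; ring. Qed.

Lemma mnorm_mid : mnorm mid = 3.
Proof. unfold mnorm, mid, sum3; simpl; rewrite Rabs_R1, Rabs_R0; ring. Qed.

Lemma Rabs_trace_le X : Rabs (trace X) <= mnorm X.
Proof.
  unfold trace; eapply Rle_trans; [apply Rabs_sum3_le|].
  unfold sum3 at 1; pose proof (Rabs_entry_le_mnorm X i0 i0).
  unfold mnorm, sum3 in *; pose proof (Rabs_pos (X i0 i1)); pose proof (Rabs_pos (X i0 i2));
    pose proof (Rabs_pos (X i1 i0)); pose proof (Rabs_pos (X i1 i2));
    pose proof (Rabs_pos (X i2 i0)); pose proof (Rabs_pos (X i2 i1)); lra.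
Qed.

Lemma mnorm_lame_le G Lam X : mnorm (lame G Lam X) <= (2 * Rabs G + 3 * Rabs Lam) * mnorm X.
Proof.
  unfold lame; eapply Rle_trans; [apply mnorm_madd_le|].
  rewrite !mnorm_mscale, mnorm_mid, !Rabs_mult, (Rabs_right 2) by lra.
  pose proof (Rabs_trace_le X); pose proof (Rabs_pos Lam); pose proof (mnorm_ge0 X).
  assert (Rabs Lam * Rabs (trace X) <= Rabs Lam * mnorm X) by (apply Rmult_le_compat_l; auto).
  lra.
Qed.

Lemma orth_entry_le1 Q k l : Orth Q -> Rabs (Q k l) <= 1.
Proof.
  intro HQ; assert (E := equal_f (equal_f HQ l) l); mat_unfold.
  pose proof (Rle_0_sqr (Q i0 l)); pose proof (Rle_0_sqr (Q i1 l));
    pose proof (Rle_0_sqr (Q i2 l)); unfold Rsqr in *.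
  assert (Hs : Q k l * Q k l <= 1) by (destruct l; simpl in E; destruct k; lra).
  apply Rabs_le; split; nra.
Qed.

Lemma Rabs_entry_sandwich_le A X B i j :
  (forall k l, Rabs (A k l) <= 1) -> (forall k l, Rabs (B k l) <= 1) ->
  Rabs (mmul (mmul A X) (mtr B) i j) <= mnorm X.
Proof.
  intros HA HB.
  replace (mmul (mmul A X) (mtr B) i j)
    with (sum3 (fun k => sum3 (fun l => A i k * X k l * B j l))) by (mat_unfold; ring).
  eapply Rle_trans; [apply Rabs_sum3_le|]; apply sum3_le; intro k.
  eapply Rle_trans; [apply Rabs_sum3_le|]; apply sum3_le; intro l.
  rewrite !Rabs_mult.
  pose proof (HA i k); pose proof (HB j l);
    pose proof (Rabs_pos (A i k)); pose proof (Rabs_pos (B j l)); pose proof (Rabs_pos (X k l)).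
  assert (Rabs (A i k) * Rabs (X k l) <= Rabs (X k l)) by nra.
  nra.
Qed.

Lemma mnorm_orth_sandwich_le P Q X : Orth P -> Orth Q ->
  mnorm (mmul (mmul P X) (mtr Q)) <= 9 * mnorm X.
Proof.
  intros HP HQ; unfold mnorm at 1; eapply Rle_trans.
  - apply sum3_le; intro i; apply sum3_le; intro j.
    apply Rabs_entry_sandwich_le; intros; apply orth_entry_le1; auto.
  - unfold sum3; lra.
Qed.

Lemma ln_lipschitz x y c : 0 < c -> c <= x -> c <= y -> Rabs (ln x - ln y) <= Rabs (x - y) / c.
Proof.
  intros Hc Hx Hy.
  assert (K : forall a b, c <= a -> c <= b -> ln a - ln b <= Rabs (a - b) / c).
  { intros a b Ha Hb.
    assert (Hl : ln (a / b) <= a / b - 1).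
    { pose proof (exp_ineq1_le (ln (a / b))) as H.
      rewrite exp_ln in H; [lra | apply Rdiv_lt_0_compat; lra]. }
    unfold Rdiv in Hl; rewrite ln_mult, ln_Rinv in Hl by (try apply Rinv_0_lt_compat; lra).
    assert (a * / b - 1 = (a - b) / b) by (field; lra).
    destruct (Rle_or_lt 0 (a - b)).
    - rewrite Rabs_right by lra.
      assert ((a - b) / b <= (a - b) / c)
        by (unfold Rdiv; apply Rmult_le_compat_l; auto; apply Rinv_le_contravar; lra).
      lra.
    - assert ((a - b) / b < 0) by (apply Rdiv_neg_pos; lra).
      assert (0 <= Rabs (a - b) / c)
        by (unfold Rdiv; apply Rmult_le_pos; [apply Rabs_pos | left; apply Rinv_0_lt_compat; lra]).
      lra. }
  apply Rabs_le; split.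
  - rewrite Rabs_minus_sym; specialize (K y x Hy Hx); lra.
  - apply K; auto.
Qed.

Lemma odiag_msub_undo Q P a b : Orth Q -> Orth P ->
  mmul (mmul (mtr Q) (msub (odiag Q a) (odiag P b))) P =
  fun i j => (a i - b j) * mmul (mtr Q) P i j.
Proof.
  intros HQ HP.
  assert (Ea : mmul (mmul (mtr Q) (odiag Q a)) P = mmul (diag a) (mmul (mtr Q) P)).
  { unfold odiag; rewrite !mmul_assoc, <- (mmul_assoc (mtr Q) Q), HQ, mmul_mid_l; auto. }
  assert (Eb : mmul (mmul (mtr Q) (odiag P b)) P = mmul (mmul (mtr Q) P) (diag b)).
  { unfold odiag; rewrite !mmul_assoc, HP, mmul_mid_r; auto. }
  replace (mmul (mmul (mtr Q) (msub (odiag Q a) (odiag P b))) P)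
    with (msub (mmul (mmul (mtr Q) (odiag Q a)) P) (mmul (mmul (mtr Q) (odiag P b)) P))
    by mat_ring.
  rewrite Ea, Eb; clear; mat_ext; mat_unfold; simpl; ring.
Qed.

(* In the common frame [W = Q^T P] the entries of the difference scale entrywise, by
   [d i - e j] resp. [ln (d i) - ln (e j)]; the rotations back cost a factor 9 each. *)
Lemma odiag_ln_lipschitz Q P d e c : Orth Q -> Orth P -> 0 < c ->
  (forall i, c <= d i) -> (forall i, c <= e i) ->
  mnorm (msub (odiag Q (fun i => ln (d i))) (odiag P (fun i => ln (e i)))) <=
  81 / c * mnorm (msub (odiag Q d) (odiag P e)).
Proof.
  intros HQ HP Hc Hd He.
  set (W := mmul (mtr Q) P).
  set (X := mmul (mmul (mtr Q) (msub (odiag Q (fun i => ln (d i))) (odiag P (fun i => ln (e i))))) P).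
  set (Y := mmul (mmul (mtr Q) (msub (odiag Q d) (odiag P e))) P).
  assert (HXY : mnorm X <= / c * mnorm Y).
  { unfold X, Y; rewrite !odiag_msub_undo by auto; fold W; unfold mnorm.
    replace (/ c * _) with (sum3 (fun i => sum3 (fun j => / c * Rabs ((d i - e j) * W i j))))
      by (unfold sum3; ring).
    apply sum3_le; intro i; apply sum3_le; intro j.
    rewrite !Rabs_mult, <- Rmult_assoc; apply Rmult_le_compat_r; [apply Rabs_pos|].
    pose proof (ln_lipschitz (d i) (e j) c Hc (Hd i) (He j)); unfold Rdiv in *; lra. }
  assert (HX : msub (odiag Q (fun i => ln (d i))) (odiag P (fun i => ln (e i)))
               = mmul (mmul Q X) (mtr P)).
  { unfold X; rewrite <- !mmul_assoc, orth_mmul_mtr, mmul_mid_l, mmul_assoc, orth_mmul_mtr,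
      mmul_mid_r; auto. }
  assert (HY : mnorm Y <= 9 * mnorm (msub (odiag Q d) (odiag P e))).
  { unfold Y; rewrite <- (mtr_mtr P) at 2; apply mnorm_orth_sandwich_le; apply orth_mtr; auto. }
  rewrite HX; eapply Rle_trans; [apply mnorm_orth_sandwich_le; auto|].
  assert (0 < / c) by (apply Rinv_0_lt_compat; auto).
  unfold Rdiv; nra.
Qed.

Lemma orth_conj_diag_entry_ge W d m j : Orth W -> (forall i, m <= d i) ->
  m <= mmul (mmul (mtr W) (diag d)) W j j.
Proof.
  intros HW Hd.
  assert (Hcol : W i0 j * W i0 j + W i1 j * W i1 j + W i2 j * W i2 j = 1).
  { assert (E := equal_f (equal_f HW j) j); mat_unfold; destruct j; simpl in *; lra. }
  replace (mmul (mmul (mtr W) (diag d)) W j j)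
    with (d i0 * (W i0 j * W i0 j) + d i1 * (W i1 j * W i1 j) + d i2 * (W i2 j * W i2 j))
    by (mat_unfold; simpl; ring).
  assert (Hk : forall k, 0 <= (d k - m) * (W k j * W k j)).
  { intro k; apply Rmult_le_pos; [pose proof (Hd k); lra | apply Rle_0_sqr]. }
  assert (m * (W i0 j * W i0 j + W i1 j * W i1 j + W i2 j * W i2 j) = m) by (rewrite Hcol; ring).
  pose proof (Hk i0); pose proof (Hk i1); pose proof (Hk i2); lra.
Qed.

(* The eigenvalues of [odiag P e] are diagonal entries of [P^T (odiag Q d + D) P]. *)
Lemma odiag_eig_lower Q P d e m : Orth Q -> Orth P -> (forall i, m <= d i) ->
  forall j, m - mnorm (msub (odiag P e) (odiag Q d)) <= e j.
Proof.
  intros HQ HP Hd j.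
  set (D := msub (odiag P e) (odiag Q d)).
  set (W := mmul (mtr Q) P).
  assert (Ej : e j = mmul (mmul (mtr W) (diag d)) W j j + mmul (mmul (mtr P) D) (mtr (mtr P)) j j).
  { transitivity (diag e j j); [destruct j; reflexivity|].
    rewrite <- (odiag_undo P e HP).
    replace (odiag P e) with (madd (odiag Q d) D) by (unfold D; mat_ring).
    unfold W, odiag; mat_unfold; ring. }
  assert (HW : Orth W) by (apply orth_mmul; auto; apply orth_mtr; auto).
  assert (HD := Rabs_entry_sandwich_le (mtr P) D (mtr P) j j).
  assert (Hfirst := orth_conj_diag_entry_ge W d m j HW Hd).
  assert (HD' : Rabs (mmul (mmul (mtr P) D) (mtr (mtr P)) j j) <= mnorm D)
    by (apply HD; intros; apply orth_entry_le1, orth_mtr; auto).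
  pose proof (Rle_abs (- mmul (mmul (mtr P) D) (mtr (mtr P)) j j)) as Hneg.
  rewrite Rabs_Ropp in Hneg; rewrite Ej; lra.
Qed.

Lemma matlog_continuous U : PSym U -> forall eps, 0 < eps -> exists delta, 0 < delta /\
  forall V, PSym V -> mdist V U < delta -> mdist (matlog V) (matlog U) < eps.
Proof.
  intros HU eps Heps.
  destruct (psym_matlog U HU) as [Q [d [HQ [Hd [EU ELU]]]]].
  set (m := Rmin (d i0) (Rmin (d i1) (d i2))).
  assert (Hm : forall i, m <= d i).
  { intros []; unfold m.
    - apply Rmin_l.
    - eapply Rle_trans; [apply Rmin_r | apply Rmin_l].
    - eapply Rle_trans; [apply Rmin_r | apply Rmin_r]. }
  assert (Hm0 : 0 < m) by (unfold m; repeat apply Rmin_glb_lt; auto).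
  exists (Rmin (m / 2) (eps * m / 162)); split.
  { apply Rmin_glb_lt; [lra | apply Rdiv_lt_0_compat; nra]. }
  intros V HV Hdist.
  destruct (psym_matlog V HV) as [P [e [HP [He [EV ELV]]]]].
  rewrite mdist_mnorm in *.
  pose proof (Rmin_l (m / 2) (eps * m / 162)); pose proof (Rmin_r (m / 2) (eps * m / 162)).
  assert (He2 : forall j, m / 2 <= e j).
  { intro j; pose proof (odiag_eig_lower Q P d e m HQ HP Hm j).
    rewrite <- EV, <- EU in H1; lra. }
  assert (Hd2 : forall i, m / 2 <= d i) by (intro i; pose proof (Hm i); lra).
  pose proof (odiag_ln_lipschitz P Q e d (m / 2) HP HQ ltac:(lra) He2 Hd2) as Hlip.
  rewrite <- EV, <- EU, <- ELV, <- ELU in Hlip.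
  replace (81 / (m / 2)) with (162 / m) in Hlip by (field; lra).
  eapply Rle_lt_trans; [exact Hlip|].
  apply (Rmult_lt_reg_l (m / 162)); [lra|].
  replace (m / 162 * (162 / m * mnorm (msub V U))) with (mnorm (msub V U)) by (field; lra).
  replace (m / 162 * eps) with (eps * m / 162) by field; lra.
Qed.
(** * The isotropic law satisfies the axioms *)

Section LawSatisfiesAxioms.

Variables (T : Mat -> Mat) (G Lam : R).
Hypothesis HT : forall U, PSym U -> T U = lame G Lam (matlog U).

Lemma lame_log_fiber V L : G <> 0 -> 3 * Lam + 2 * G <> 0 -> IsLog V L ->
  forall U, PSym U -> (U = V <-> T U = lame G Lam L).
Proof.
  intros HG HL HV U HU; rewrite HT by auto; split.
  - intro E; subst; rewrite (matlog_IsLog _ _ HV); auto.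
  - intro E; apply lame_inj in E; auto.
    apply (IsLog_inj _ _ L); auto; rewrite <- E; apply psym_IsLog_matlog; auto.
Qed.

Lemma A0_2_of_lame_log : G <> 0 -> 3 * Lam + 2 * G <> 0 -> A0_2 T.
Proof.
  intros HG HL U HU; rewrite <- (lame_mzero G Lam); symmetry; apply lame_log_fiber; auto.
  replace mid with (diag (fun _ => 1)) by (mat_ext; reflexivity).
  replace mzero with (diag (fun _ => ln 1)) by (rewrite ln_1; mat_ext; reflexivity).
  apply IsLog_diag; intros; lra.
Qed.

Lemma A1_of_lame_log : G <> 0 -> 3 * Lam + 2 * G <> 0 -> Defs.A1 T.
Proof.
  intros HG HL al Hal; exists (2 * G * ln al).
  set (d := fun i => match i with i0 => al | i1 => / al | i2 => 1 end).
  assert (Hd : forall i, 0 < d i) by (intros []; simpl; try apply Rinv_0_lt_compat; lra).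
  replace (diag3 (2 * G * ln al) (- (2 * G * ln al)) 0)
    with (lame G Lam (diag (fun i => ln (d i)))).
  - apply lame_log_fiber; auto; apply IsLog_diag; auto.
  - assert (Hl1 : ln (/ al) = - ln al) by (apply ln_Rinv; auto).
    unfold lame, d; mat_ext; mat_unfold; simpl; rewrite ?Hl1, ?ln_1; ring.
Qed.

Lemma A2_of_lame_log : G <> 0 -> 3 * Lam + 2 * G <> 0 -> A2 T.
Proof.
  intros HG HL lam Hlam; exists ((2 * G + 3 * Lam) * ln lam).
  replace (mscale ((2 * G + 3 * Lam) * ln lam) mid) with (lame G Lam (diag (fun _ => ln lam)))
    by (unfold lame; mat_ring).
  apply lame_log_fiber; auto.
  replace (mscale lam mid) with (diag (fun _ => lam)) by mat_ring.
  apply IsLog_diag; auto.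
Qed.

Lemma A0_3_of_lame_log : A0_3 T.
Proof.
  intros Q U HQ HU.
  destruct (psym_matlog U HU) as [P [d [HP [Hd [EU EL]]]]].
  assert (HQP : Orth (mmul (mtr Q) P)) by (apply orth_mmul; auto; apply orth_mtr; auto).
  assert (EQU : mmul (mmul (mtr Q) U) Q = odiag (mmul (mtr Q) P) d)
    by (rewrite EU, odiag_mmul_orth; reflexivity).
  rewrite EQU, !HT by (auto; apply odiag_psym; auto).
  rewrite (matlog_IsLog _ _ (IsLog_odiag _ _ HQP Hd)), <- lame_orth_conj, EL by auto.
  rewrite odiag_mmul_orth; reflexivity.
Qed.

Lemma A3_of_lame_log : A3 T.
Proof.
  intros U1 U2 H1 H2 HC.
  destruct (commuting_sym_simul U1 U2 (proj1 H1) (proj1 H2) HC) as (P & a & b & HP & E1 & E2).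
  assert (Ha := psym_odiag_pos _ _ _ H1 HP E1); assert (Hb := psym_odiag_pos _ _ _ H2 HP E2).
  assert (Hab : forall i, 0 < a i * b i) by (intro i; apply Rmult_lt_0_compat; auto).
  rewrite E1, E2, odiag_mmul, !HT by (auto; apply odiag_psym; auto).
  rewrite (matlog_IsLog _ _ (IsLog_odiag _ _ HP Hab)), (matlog_IsLog _ _ (IsLog_odiag _ _ HP Ha)),
    (matlog_IsLog _ _ (IsLog_odiag _ _ HP Hb)).
  rewrite <- lame_madd, odiag_madd; do 2 f_equal.
  apply functional_extensionality; intro i; apply ln_mult; auto.
Qed.

Lemma A0_1_of_lame_log : A0_1 T.
Proof.
  intros U HU eps Heps.
  set (K := 2 * Rabs G + 3 * Rabs Lam + 1).
  assert (HK : 0 < K) by (unfold K; pose proof (Rabs_pos G); pose proof (Rabs_pos Lam); lra).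
  destruct (matlog_continuous U HU (eps / K)) as [delta [Hdelta Hcont]];
    [apply Rdiv_lt_0_compat; auto|].
  exists delta; split; auto; intros V HV Hdist.
  specialize (Hcont V HV Hdist); rewrite mdist_mnorm in *.
  rewrite !HT, <- lame_msub by auto.
  eapply Rle_lt_trans; [apply mnorm_lame_le|].
  pose proof (mnorm_ge0 (msub (matlog V) (matlog U))).
  apply (Rle_lt_trans _ (K * mnorm (msub (matlog V) (matlog U)))); [unfold K; nra|].
  apply (Rlt_le_trans _ (K * (eps / K))); [apply Rmult_lt_compat_l; auto | right; field; lra].
Qed.

Lemma lame_log_axioms : G <> 0 -> 3 * Lam + 2 * G <> 0 -> AllAxioms T.
Proof.
  intros HG HL.
  split; [apply A0_1_of_lame_log|]; split; [apply A0_2_of_lame_log; auto|].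
  split; [apply A0_3_of_lame_log|]; split; [apply A1_of_lame_log; auto|].
  split; [apply A2_of_lame_log; auto | apply A3_of_lame_log].
Qed.

End LawSatisfiesAxioms.

(** * Additive functions continuous at the origin *)

Definition tends_to_0_at_0 (h : R -> R) : Prop :=
  forall eps, 0 < eps -> exists delta, 0 < delta /\ forall x, Rabs x < delta -> Rabs (h x) < eps.

Section Additive.

Variable h : R -> R.
Hypothesis h_add : forall x y, h (x + y) = h x + h y.

Lemma additive_0 : h 0 = 0.
Proof. pose proof (h_add 0 0) as E; rewrite Rplus_0_r in E; lra. Qed.

Lemma additive_opp x : h (- x) = - h x.
Proof. pose proof (h_add x (- x)) as E; rewrite Rplus_opp_r, additive_0 in E; lra. Qed.

Lemma additive_Zmult (z : Z) x : h (IZR z * x) = IZR z * h x.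
Proof.
  induction z using Z.peano_ind.
  - rewrite Rmult_0_l, additive_0; ring.
  - rewrite succ_IZR, Rmult_plus_distr_r, h_add, IHz, Rmult_1_l; ring.
  - rewrite <- Z.sub_1_r, minus_IZR.
    replace ((IZR z - 1) * x) with (IZR z * x + - x) by ring.
    rewrite h_add, IHz, additive_opp; ring.
Qed.

(* [h] vanishes on the lattice [Z / N], and every [x] lies within [1 / N] of it. *)
Lemma additive_period1_eq0 : h 1 = 0 -> tends_to_0_at_0 h -> forall x, h x = 0.
Proof.
  intros h1 Hcont x.
  destruct (Req_dec (h x) 0) as [|Hx]; auto; exfalso.
  destruct (Hcont _ (Rabs_pos_lt _ Hx)) as [dl [Hdl Hsmall]].
  destruct (archimed (/ dl)) as [HN _]; set (N := up (/ dl)) in *.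
  assert (HN0 : 0 < IZR N) by (pose proof (Rinv_0_lt_compat dl Hdl); lra).
  assert (HNdl : / IZR N < dl).
  { apply (Rmult_lt_reg_l (IZR N)); auto; rewrite Rinv_r by lra.
    apply (Rmult_lt_reg_l (/ dl)); [apply Rinv_0_lt_compat; auto|].
    replace (/ dl * (IZR N * dl)) with (IZR N) by (field; lra); lra. }
  assert (hN : h (/ IZR N) = 0).
  { assert (E := additive_Zmult N (/ IZR N)); rewrite Rinv_r, h1 in E by lra.
    apply (Rmult_eq_reg_l (IZR N)); lra. }
  destruct (archimed (IZR N * x)) as [Hup1 Hup2].
  set (r := (IZR (up (IZR N * x)) - 1) * / IZR N).
  assert (hr : h r = 0).
  { unfold r; rewrite <- minus_IZR, additive_Zmult, hN; ring. }
  assert (Hxr : 0 <= x - r < / IZR N).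
  { replace (x - r) with ((IZR N * x - IZR (up (IZR N * x)) + 1) * / IZR N)
      by (unfold r; field; lra).
    pose proof (Rinv_0_lt_compat _ HN0); split; [apply Rmult_le_pos; lra|].
    rewrite <- (Rmult_1_l (/ IZR N)) at 2; apply Rmult_lt_compat_r; lra. }
  specialize (Hsmall (x - r) ltac:(rewrite Rabs_right; lra)).
  unfold Rminus in Hsmall; rewrite h_add, additive_opp, hr, Ropp_0, Rplus_0_r in Hsmall; lra.
Qed.

End Additive.

Lemma additive_continuous_linear h : (forall x y, h (x + y) = h x + h y) ->
  tends_to_0_at_0 h -> forall x, h x = x * h 1.
Proof.
  intros h_add Hcont x.
  set (phi := fun x => h x - x * h 1).
  enough (phi x = 0) by (unfold phi in *; lra).
  apply additive_period1_eq0; [intros; unfold phi; rewrite h_add; ring | unfold phi; ring |].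
  intros eps Heps.
  destruct (Hcont (eps / 2)) as [d1 [Hd1 Hh]]; [lra|].
  set (d2 := eps / 2 / (Rabs (h 1) + 1)).
  assert (Hd2 : 0 < d2) by (apply Rdiv_lt_0_compat; [|pose proof (Rabs_pos (h 1))]; lra).
  exists (Rmin d1 d2); split; [apply Rmin_glb_lt; auto|].
  intros y Hy; pose proof (Rmin_l d1 d2); pose proof (Rmin_r d1 d2).
  specialize (Hh y ltac:(lra)).
  assert (Hlin : Rabs (y * h 1) <= eps / 2).
  { rewrite Rabs_mult; pose proof (Rabs_pos (h 1)); pose proof (Rabs_pos y).
    assert (Rabs y * (Rabs (h 1) + 1) <= d2 * (Rabs (h 1) + 1))
      by (apply Rmult_le_compat_r; lra).
    replace (d2 * (Rabs (h 1) + 1)) with (eps / 2) in * by (unfold d2; field; lra).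
    nra. }
  unfold phi, Rminus; eapply Rle_lt_trans; [apply Rabs_triang|]; rewrite Rabs_Ropp; lra.
Qed.

(** * The axioms force the isotropic law *)

Definition expv (x y z : R) : Vec :=
  fun i => match i with i0 => exp x | i1 => exp y | i2 => exp z end.

Lemma expv_pos x y z i : 0 < expv x y z i.
Proof. destruct i; apply exp_pos. Qed.

Definition reflect0 : Mat := diag (fun i => match i with i0 => -1 | _ => 1 end).
Definition reflect1 : Mat := diag (fun i => match i with i1 => -1 | _ => 1 end).

Section AxiomsForceLaw.

Variable T : Mat -> Mat.
Hypotheses (T_cont : A0_1 T) (T_zero : A0_2 T) (T_iso : A0_3 T) (T_log : A3 T).

(* Invariance under the reflections [reflect0], [reflect1], which fix [diag d], kills the
   off-diagonal entries. *)
Lemma T_diag_diagonal d : (forall i, 0 < d i) -> T (diag d) = diag (fun i => T (diag d) i i).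
Proof.
  intro Hd; assert (HP := diag_psym d Hd).
  assert (E0 := T_iso reflect0 (diag d) ltac:(unfold Orth, reflect0; mat_ring) HP).
  assert (E1 := T_iso reflect1 (diag d) ltac:(unfold Orth, reflect1; mat_ring) HP).
  replace (mmul (mmul (mtr reflect0) (diag d)) reflect0) with (diag d) in E0
    by (unfold reflect0; mat_ring).
  replace (mmul (mmul (mtr reflect1) (diag d)) reflect1) with (diag d) in E1
    by (unfold reflect1; mat_ring).
  set (X := T (diag d)) in *; clearbody X.
  pose proof (fun i j => equal_f (equal_f E0 i) j) as F0;
    pose proof (fun i j => equal_f (equal_f E1 i) j) as F1.
  unfold reflect0, reflect1 in *; mat_unfold.
  apply diag_offdiag0.
  - specialize (F0 i0 i1); simpl in F0; lra.
  - specialize (F0 i0 i2); simpl in F0; lra.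
  - specialize (F0 i1 i0); simpl in F0; lra.
  - specialize (F1 i1 i2); simpl in F1; lra.
  - specialize (F0 i2 i0); simpl in F0; lra.
  - specialize (F1 i2 i1); simpl in F1; lra.
Qed.

Lemma T_diag_mult a b : (forall i, 0 < a i) -> (forall i, 0 < b i) ->
  T (diag (fun i => a i * b i)) = madd (T (diag a)) (T (diag b)).
Proof.
  intros Ha Hb; rewrite <- diag_mmul; apply T_log; try apply diag_psym; auto.
  unfold coaxial; rewrite !diag_mmul; f_equal.
  apply functional_extensionality; intro; ring.
Qed.

Definition stretch (t : R) : Mat := T (diag (expv t 0 0)).

Lemma stretch_add s t : stretch (s + t) = madd (stretch s) (stretch t).
Proof.
  unfold stretch; rewrite <- T_diag_mult by apply expv_pos; do 2 f_equal.
  vec_ext; unfold expv; rewrite ?exp_plus, ?Rplus_0_r, ?exp_0; ring.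
Qed.

Lemma stretch_entry_tends_to_0 k : tends_to_0_at_0 (fun t => stretch t k k).
Proof.
  intros eps Heps.
  assert (Hmid : PSym mid).
  { replace mid with (diag (fun _ => 1)) by (mat_ext; reflexivity).
    apply diag_psym; intros; lra. }
  assert (Tmid : T mid = mzero) by (apply T_zero; auto).
  destruct (T_cont mid Hmid eps Heps) as [d1 [Hd1 Hc]].
  destruct (derivable_continuous _ derivable_exp 0 d1 Hd1) as [d2 [Hd2 Hexp]].
  exists d2; split; auto; intros t Ht.
  destruct (Req_dec t 0) as [->|Ht0].
  { unfold stretch; replace (diag (expv 0 0 0)) with mid
      by (unfold expv; rewrite exp_0; mat_ext; reflexivity).
    rewrite Tmid; unfold mzero; rewrite Rabs_R0; auto. }
  assert (Hd : Rabs (exp t - 1) < d1).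
  { specialize (Hexp t); simpl in Hexp; unfold R_dist in Hexp; rewrite exp_0 in Hexp.
    apply Hexp; split; [split; [exact I | auto] | rewrite Rminus_0_r; auto]. }
  assert (Hm : mdist (diag (expv t 0 0)) mid < d1).
  { unfold mdist, diag, mid, expv, sum3; simpl; rewrite exp_0.
    replace (1 - 1) with 0 by ring; replace (0 - 0) with 0 by ring.
    rewrite Rabs_R0, !Rplus_0_r; exact Hd. }
  specialize (Hc _ (diag_psym _ (expv_pos t 0 0)) Hm); rewrite Tmid, mdist_mnorm in Hc.
  pose proof (Rabs_entry_le_mnorm (msub (T (diag (expv t 0 0))) mzero) k k) as Hk.
  replace (msub _ mzero k k) with (stretch t k k) in Hk by (unfold msub, mzero, stretch; ring).
  lra.
Qed.

Lemma stretch_form t : stretch t =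
  diag (fun i => match i with i0 => t * stretch 1 i0 i0 | _ => t * stretch 1 i1 i1 end).
Proof.
  assert (Hlin : forall k, stretch t k k = t * stretch 1 k k).
  { intro k; apply (additive_continuous_linear (fun t => stretch t k k));
      [intros; rewrite stretch_add; reflexivity | apply stretch_entry_tends_to_0]. }
  assert (H12 : stretch t i2 i2 = stretch t i1 i1).
  { assert (E := T_iso swap12 (diag (expv t 0 0)) swap12_orth (diag_psym _ (expv_pos t 0 0))).
    replace (mmul (mmul (mtr swap12) (diag (expv t 0 0))) swap12) with (diag (expv t 0 0)) in E
      by (unfold swap12, expv; rewrite exp_0; mat_ring).
    assert (E11 := equal_f (equal_f E i1) i1); fold (stretch t) in E11.
    unfold swap12 in E11; mat_unfold; simpl in E11; lra. }
  unfold stretch at 1; rewrite T_diag_diagonal by apply expv_pos; fold (stretch t).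
  f_equal; vec_ext; rewrite ?H12; apply Hlin.
Qed.

Definition modulus_G : R := (stretch 1 i0 i0 - stretch 1 i1 i1) / 2.
Definition modulus_Lam : R := stretch 1 i1 i1.

(* [diag d] is the product of three coaxial stretches, each a permuted copy of [stretch]. *)
Lemma T_diag_lame d : (forall i, 0 < d i) ->
  T (diag d) = lame modulus_G modulus_Lam (diag (fun i => ln (d i))).
Proof.
  intro Hd.
  assert (Hy : forall y, T (diag (expv 0 y 0)) = mmul (mmul (mtr swap01) (stretch y)) swap01).
  { intro y; unfold stretch; rewrite <- T_iso by (apply swap01_orth || apply diag_psym, expv_pos).
    f_equal; unfold swap01, expv; mat_ring. }
  assert (Hz : forall z, T (diag (expv 0 0 z)) = mmul (mmul (mtr swap02) (stretch z)) swap02).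
  { intro z; unfold stretch; rewrite <- T_iso by (apply swap02_orth || apply diag_psym, expv_pos).
    f_equal; unfold swap02, expv; mat_ring. }
  set (a := expv (ln (d i0)) 0 0); set (b := expv 0 (ln (d i1)) 0);
    set (c := expv 0 0 (ln (d i2))).
  assert (Ed : diag d = diag (fun i => (a i * b i) * c i)).
  { f_equal; vec_ext; unfold a, b, c, expv; rewrite exp_0, exp_ln by auto; ring. }
  assert (Hab : forall i, 0 < a i * b i) by (intro; apply Rmult_lt_0_compat; apply expv_pos).
  rewrite Ed, (T_diag_mult (fun i => a i * b i) c Hab (expv_pos _ _ _)),
    (T_diag_mult a b (expv_pos _ _ _) (expv_pos _ _ _)).
  unfold a, b, c; rewrite Hy, Hz; fold (stretch (ln (d i0))).
  rewrite (stretch_form (ln (d i0))), (stretch_form (ln (d i1))), (stretch_form (ln (d i2))).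
  unfold lame, modulus_G, modulus_Lam, swap01, swap02.
  generalize (stretch 1 i0 i0) (stretch 1 i1 i1); intros u v.
  mat_ext; mat_unfold; simpl; field.
Qed.

Lemma T_lame_log U : PSym U -> T U = lame modulus_G modulus_Lam (matlog U).
Proof.
  intro HU; destruct (psym_matlog U HU) as [Q [d [HQ [Hd [EU EL]]]]].
  assert (E := T_iso Q U HQ HU).
  assert (Ediag : mmul (mmul (mtr Q) U) Q = diag d) by (rewrite EU; apply odiag_undo; auto).
  rewrite Ediag, T_diag_lame in E by auto.
  rewrite <- (orth_conj_cancel Q (T U) HQ), <- E, EL; unfold odiag.
  symmetry; apply (lame_orth_conj _ _ (mtr Q)), orth_mtr; auto.
Qed.

Lemma modulus_G_neq0 : modulus_G <> 0.
Proof.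
  intro HG.
  assert (E : T (diag (expv 1 (-1) 0)) = mzero).
  { rewrite T_diag_lame by apply expv_pos; unfold lame, expv; rewrite HG.
    mat_ext; mat_unfold; simpl; rewrite ?ln_exp; ring. }
  apply T_zero in E; [|apply diag_psym, expv_pos].
  assert (E00 := equal_f (equal_f E i0) i0); unfold expv, diag, mid in E00; simpl in E00.
  pose proof (exp_ineq1 1 ltac:(lra)); lra.
Qed.

Lemma modulus_bulk_neq0 : 3 * modulus_Lam + 2 * modulus_G <> 0.
Proof.
  intro HK.
  assert (E : T (diag (expv 1 1 1)) = mzero).
  { rewrite T_diag_lame by apply expv_pos; unfold lame, expv.
    mat_ext; mat_unfold; simpl; rewrite ?ln_exp; lra. }
  apply T_zero in E; [|apply diag_psym, expv_pos].
  assert (E00 := equal_f (equal_f E i0) i0); unfold expv, diag, mid in E00; simpl in E00.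
  pose proof (exp_ineq1 1 ltac:(lra)); lra.
Qed.

End AxiomsForceLaw.

Lemma axioms_lame_log T : AllAxioms T -> exists G Lam, G <> 0 /\ 3 * Lam + 2 * G <> 0 /\
  forall U, PSym U -> T U = lame G Lam (matlog U).
Proof.
  intros (Hcont & Hzero & Hiso & _ & _ & Hlog).
  exists (modulus_G T), (modulus_Lam T); split; [|split].
  - apply modulus_G_neq0; auto.
  - apply modulus_bulk_neq0; auto.
  - intros; apply T_lame_log; auto.
Qed.

Lemma axioms_iff_lame_log T : AllAxioms T <->
  exists G Lam, G <> 0 /\ 3 * Lam + 2 * G <> 0 /\ forall U, PSym U -> T U = lame G Lam (matlog U).
Proof.
  split; [apply axioms_lame_log|].
  intros (G & Lam & HG & HL & HF); apply (lame_log_axioms T G Lam); auto.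
Qed.

Lemma lame_log_iff_dev3_log T :
  (exists G Lam, G <> 0 /\ 3 * Lam + 2 * G <> 0 /\
     forall U, PSym U -> T U = lame G Lam (matlog U)) <->
  (exists G K, G <> 0 /\ K <> 0 /\ forall U, PSym U ->
     T U = madd (mscale (2 * G) (dev3 (matlog U))) (mscale (K * trace (matlog U)) mid)).
Proof.
  split.
  - intros (G & Lam & HG & HL & HF); exists G, (Lam + 2 * G / 3); split; [|split]; auto.
    + intro E; apply HL; replace (3 * Lam + 2 * G) with (3 * (Lam + 2 * G / 3)) by field.
      rewrite E; ring.
    + intros U HU; rewrite lame_dev3, HF by auto; f_equal; field.
  - intros (G & K & HG & HK & HF); exists G, (K - 2 * G / 3); split; [|split]; auto.
    + intro E; apply HK; replace K with ((3 * (K - 2 * G / 3) + 2 * G) / 3) by field.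
      rewrite E; field.
    + intros U HU; rewrite HF, lame_dev3 by auto; reflexivity.
Qed.

Theorem mainTheorem7 (T : Mat -> Mat) (HT : forall U, PSym U -> Sym (T U)) :
  (AllAxioms T <->
    exists G Lam : R, G <> 0 /\ 3 * Lam + 2 * G <> 0 /\
      forall U, PSym U ->
        T U = madd (mscale (2 * G) (matlog U))
                   (mscale (Lam * trace (matlog U)) mid)) /\
  (AllAxioms T <->
    exists G K : R, G <> 0 /\ K <> 0 /\
      forall U, PSym U ->
        T U = madd (mscale (2 * G) (dev3 (matlog U)))
                   (mscale (K * trace (matlog U)) mid)).
Proof.
  split; [exact (axioms_iff_lame_log T)|].
  rewrite axioms_iff_lame_log; apply lame_log_iff_dev3_log.
Qed.
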